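(* Let $\Gamma$ be a group and $N$ a central subgroup. Then: (i) if there exists $g_0\in \Gamma$ such that $g_0^k\notin N$ for all nonzero $k\in \mathbb Z$, then the HNN-extension $\langle \Gamma, t\;|\; t^{-1}Nt = N, \; \mathrm{id}\rangle$ embeds into the amalgamated free product $\Gamma \ast_{N=N} \Gamma$; (ii) if for every $K\in \mathbb N$ there exists $g_0\in \Gamma$ such that $g_0^k\notin N$ for all $k$ with $1\le |k|\le K$, and the HNN-extension $\langle \Gamma, t\;|\; t^{-1}Nt = N, \; \mathrm{id}\rangle$ is not residually finite, then $\Gamma \ast_{N=N} \Gamma$ is not residually finite.
   Context: $\langle \Gamma, t\;|\; t^{-1}Nt = N, \mathrm{id}\rangle$ is the HNN-extension with stable letter $t$ commuting with every element of $N$; $\Gamma\ast_{N=N}\Gamma$ is the free product of two copies of $\Gamma$ amalgamated along the identity on $N$. A group is residually finite if homomorphisms to finite groups separate its points. *)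

From Stdlib Require Import ZArith List.
Set Implicit Arguments.

Record grp := Grp {
  car :> Type;
  gmul : car -> car -> car;
  gone : car;
  ginv : car -> car;
  gmulA : forall x y z, gmul x (gmul y z) = gmul (gmul x y) z;
  gmul1 : forall x, gmul gone x = x;
  gmulV : forall x, gmul (ginv x) x = gone
}.

Arguments gmul {g}. Arguments gone {g}. Arguments ginv {g}.

Record hom (G H : grp) := Hom {
  hfun :> G -> H;
  hfunM : forall x y, hfun (gmul x y) = gmul (hfun x) (hfun y)
}.

Fixpoint npow {G : grp} (g : G) (n : nat) : G :=
  match n with O => gone | S m => gmul g (npow g m) end.

Definition zpow {G : grp} (g : G) (k : Z) : G :=
  match k with
  | Z0 => gone
  | Zpos p => npow g (Pos.to_nat p)
  | Zneg p => ginv (npow g (Pos.to_nat p))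
  end.

Definition is_subgroup {G : grp} (N : G -> Prop) : Prop :=
  N gone /\ (forall x y, N x -> N y -> N (gmul x y)) /\ (forall x, N x -> N (ginv x)).

Definition is_central {G : grp} (N : G -> Prop) : Prop :=
  forall n g, N n -> gmul n g = gmul g n.

(* H, with iota : Gamma -> H and stable letter t, is the HNN-extension
   < Gamma, t | t^-1 N t = N, id >  (universal property). *)
Definition is_HNN_id (Gam : grp) (N : Gam -> Prop)
    (H : grp) (iota : hom Gam H) (t : H) : Prop :=
  (forall n, N n -> gmul (ginv t) (gmul (iota n) t) = iota n) /\
  (forall (G : grp) (f : hom Gam G) (s : G),
     (forall n, N n -> gmul (ginv s) (gmul (f n) s) = f n) ->
     (exists h : hom H G, (forall g, h (iota g) = f g) /\ h t = s) /\
     (forall h1 h2 : hom H G,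
        (forall g, h1 (iota g) = f g) -> h1 t = s ->
        (forall g, h2 (iota g) = f g) -> h2 t = s ->
        forall x, h1 x = h2 x)).

(* A, with j1 j2 : Gamma -> A, is the amalgamated free product
   Gamma *_{N=N} Gamma along the identity of N (universal property). *)
Definition is_amalgam_id (Gam : grp) (N : Gam -> Prop)
    (A : grp) (j1 j2 : hom Gam A) : Prop :=
  (forall n, N n -> j1 n = j2 n) /\
  (forall (G : grp) (f1 f2 : hom Gam G),
     (forall n, N n -> f1 n = f2 n) ->
     (exists h : hom A G, (forall g, h (j1 g) = f1 g) /\ (forall g, h (j2 g) = f2 g)) /\
     (forall h1 h2 : hom A G,
        (forall g, h1 (j1 g) = f1 g) -> (forall g, h1 (j2 g) = f2 g) ->
        (forall g, h2 (j1 g) = f1 g) -> (forall g, h2 (j2 g) = f2 g) ->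
        forall x, h1 x = h2 x)).

Definition embeds (G H : grp) : Prop :=
  exists f : hom G H, forall x y, f x = f y -> x = y.

Definition finite_grp (F : grp) : Prop := exists l : list F, forall x, In x l.

Definition residually_finite (G : grp) : Prop :=
  forall g : G, g <> gone ->
    exists (F : grp) (phi : hom G F), finite_grp F /\ phi g <> gone.

From Stdlib Require Import ZArith List Lia.
From Stdlib Require Import ClassicalEpsilon FunctionalExtensionality.
From Stdlib Require Import PropExtensionality ProofIrrelevance.
Import ListNotations.

(* For c in Gam, centrality of N lets iota g |-> j1 g, t |-> j2 c define phi_c : H -> A.
   Every element of H is a word t^e1 iota(g1) ... t^en iota(gn), which rewrites to a
   reduced one: g_i not in N for i < n and e_i <> 0 for i > 1.  If c^e_i is not in N
   for the non-zero exponents, the image of a reduced word acts non-trivially on the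
   normal forms of (Gam/N) * (Gam/N), on which A acts factorwise by left
   multiplication; the only exception is a single letter iota(g), and then the
   retraction A -> Gam gives g = 1.  So phi_c is injective under (i), and under (ii)
   each x <> 1 of H survives in A under a suitable phi_c, hence in a finite quotient. *)

Local Infix "⋅" := gmul (at level 40, left associativity).
Arguments gmulA {g} x y z. Arguments gmul1 {g} x. Arguments gmulV {g} x.

Section GroupLaws.
Context {G : grp}.
Implicit Types x y z : G.

Lemma mulgV x : x ⋅ ginv x = gone.
Proof.
  rewrite <- (gmul1 (x ⋅ ginv x)), <- (gmulV (ginv x)) at 1.
  rewrite <- gmulA, (gmulA (ginv x) x), gmulV, gmul1. apply gmulV.
Qed.

Lemma mulg1 x : x ⋅ gone = x.
Proof. rewrite <- (gmulV x), gmulA, mulgV, gmul1. reflexivity. Qed.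

Lemma mulKg x y : ginv x ⋅ (x ⋅ y) = y.
Proof. rewrite gmulA, gmulV, gmul1. reflexivity. Qed.

Lemma mulKVg x y : x ⋅ (ginv x ⋅ y) = y.
Proof. rewrite gmulA, mulgV, gmul1. reflexivity. Qed.

Lemma mulgI x y z : x ⋅ y = x ⋅ z -> y = z.
Proof. intros E. rewrite <- (mulKg x y), <- (mulKg x z), E. reflexivity. Qed.

Lemma invg_unique x y : x ⋅ y = gone -> y = ginv x.
Proof. intros E. apply (mulgI x). rewrite E, mulgV. reflexivity. Qed.

Lemma invgK x : ginv (ginv x) = x.
Proof. symmetry. apply invg_unique, gmulV. Qed.

Lemma invMg x y : ginv (x ⋅ y) = ginv y ⋅ ginv x.
Proof.
  symmetry. apply invg_unique.
  rewrite <- gmulA, (gmulA y), mulgV, gmul1, mulgV. reflexivity.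
Qed.

Lemma invg1 : ginv (@gone G) = gone.
Proof. symmetry. apply invg_unique, gmul1. Qed.

Definition commute x y := x ⋅ y = y ⋅ x.

Lemma commuteV x y : commute x y -> commute x (ginv y).
Proof.
  unfold commute. intros E. apply (mulgI y).
  rewrite mulKVg, gmulA, <- E, <- gmulA, mulgV, mulg1. reflexivity.
Qed.

Lemma commute_npow x y n : commute x y -> commute x (npow y n).
Proof.
  unfold commute. intros E. induction n as [|n IH]; simpl.
  - rewrite gmul1, mulg1. reflexivity.
  - rewrite gmulA, E, <- gmulA, IH, gmulA. reflexivity.
Qed.

Lemma commute_zpow x y e : commute x y -> commute x (zpow y e).
Proof.
  intros E. destruct e; simpl.
  - unfold commute. rewrite gmul1, mulg1. reflexivity.
  - apply commute_npow, E.
  - apply commuteV, commute_npow, E.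
Qed.

Lemma zpowS x e : zpow x (Z.succ e) = x ⋅ zpow x e.
Proof.
  destruct e as [|p|p].
  - reflexivity.
  - replace (Z.succ (Zpos p)) with (Zpos (Pos.succ p)) by lia.
    unfold zpow. rewrite Pos2Nat.inj_succ. reflexivity.
  - destruct (Pos.succ_pred_or p) as [->|<-].
    + simpl. rewrite mulg1, mulgV. reflexivity.
    + replace (Z.succ (Zneg (Pos.succ (Pos.pred p)))) with (Zneg (Pos.pred p)) by lia.
      unfold zpow. rewrite Pos2Nat.inj_succ. simpl.
      set (y := npow x (Pos.to_nat (Pos.pred p))).
      assert (Cx : commute x (ginv y)) by apply commuteV, commute_npow, eq_refl.
      rewrite invMg, gmulA, Cx, <- gmulA, mulgV, mulg1. reflexivity.
Qed.

Lemma zpowD x a b : zpow x (a + b) = zpow x a ⋅ zpow x b.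
Proof.
  induction a as [|a IH|a IH] using Z.peano_ind.
  - symmetry. apply gmul1.
  - replace (Z.succ a + b)%Z with (Z.succ (a + b)) by lia.
    rewrite !zpowS, IH, gmulA. reflexivity.
  - apply (mulgI x). rewrite <- zpowS, gmulA, <- zpowS.
    replace (Z.succ (Z.pred a + b)) with (a + b)%Z by lia.
    rewrite Z.succ_pred. exact IH.
Qed.

Lemma zpowN x e : zpow x (- e) = ginv (zpow x e).
Proof. apply invg_unique. rewrite <- zpowD, Z.add_opp_diag_r. reflexivity. Qed.

End GroupLaws.

Section Morphisms.
Context {G K : grp} (h : hom G K).

Lemma morph1 : h gone = gone.
Proof. apply (mulgI (h gone)). rewrite <- hfunM, gmul1, mulg1. reflexivity. Qed.

Lemma morphV x : h (ginv x) = ginv (h x).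
Proof. apply invg_unique. rewrite <- hfunM, mulgV. apply morph1. Qed.

Lemma morph_zpow x e : h (zpow x e) = zpow (h x) e.
Proof.
  assert (Hn : forall n, h (npow x n) = npow (h x) n).
  { induction n as [|n IH]; simpl; [apply morph1|]. rewrite hfunM, IH. reflexivity. }
  destruct e; simpl; [apply morph1 | apply Hn | rewrite morphV, Hn; reflexivity].
Qed.

Lemma morph_injective : (forall x, h x = gone -> x = gone) -> forall x y, h x = h y -> x = y.
Proof.
  intros Ker x y E.
  assert (Exy : x ⋅ ginv y = gone) by (apply Ker; rewrite hfunM, morphV, E; apply mulgV).
  rewrite <- (invgK y), (invg_unique _ _ Exy), invgK. reflexivity.
Qed.

End Morphisms.

Definition hom_comp {G K L : grp} (f : hom G K) (g : hom K L) : hom G L :=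
  Hom G L (fun x => g (f x)) (fun x y => eq_trans (f_equal g (hfunM f x y)) (hfunM g _ _)).

Definition hom_id (G : grp) : hom G G := Hom G G (fun x : G => x) (fun x y => eq_refl).

Record perm (X : Type) := Perm {
  perm_fun : X -> X;
  perm_inv : X -> X;
  perm_funK : forall x, perm_fun (perm_inv x) = x;
  perm_invK : forall x, perm_inv (perm_fun x) = x }.
Arguments Perm {X}. Arguments perm_fun {X}. Arguments perm_inv {X}.
Arguments perm_funK {X}. Arguments perm_invK {X}.

Lemma perm_ext {X : Type} (p q : perm X) :
  (forall x, perm_fun p x = perm_fun q x) -> (forall x, perm_inv p x = perm_inv q x) -> p = q.
Proof.
  destruct p as [f g fg gf], q as [f' g' fg' gf']; simpl; intros Ef Eg.
  assert (f = f') as <- by (extensionality x; apply Ef).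
  assert (g = g') as <- by (extensionality x; apply Eg).
  f_equal; apply proof_irrelevance.
Qed.

Definition perm_mul {X : Type} (p q : perm X) : perm X :=
  Perm (fun x => perm_fun p (perm_fun q x)) (fun x => perm_inv q (perm_inv p x))
    (fun x => eq_trans (f_equal (perm_fun p) (perm_funK q _)) (perm_funK p x))
    (fun x => eq_trans (f_equal (perm_inv q) (perm_invK p _)) (perm_invK q x)).

Definition perm_one (X : Type) : perm X :=
  Perm (fun x : X => x) (fun x => x) (fun x => eq_refl) (fun x => eq_refl).

Definition perm_invg {X : Type} (p : perm X) : perm X :=
  Perm (perm_inv p) (perm_fun p) (perm_invK p) (perm_funK p).

Definition Sym (X : Type) : grp.
Proof.
  refine (@Grp (perm X) perm_mul (perm_one X) perm_invg _ _ _);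
    intros; apply perm_ext; intros; simpl; auto using perm_invK.
Defined.

Lemma proj1_sig_inj {A : Type} {P : A -> Prop} (u v : {a : A | P a}) :
  proj1_sig u = proj1_sig v -> u = v.
Proof. apply eq_sig_hprop. intros; apply proof_irrelevance. Qed.

Definition sub_grp {G : grp} (P : G -> Prop) (HP : is_subgroup P) : grp.
Proof.
  refine (@Grp {x : G | P x}
    (fun a b => exist P (proj1_sig a ⋅ proj1_sig b)
                  (proj1 (proj2 HP) _ _ (proj2_sig a) (proj2_sig b)))
    (exist P gone (proj1 HP))
    (fun a => exist P (ginv (proj1_sig a)) (proj2 (proj2 HP) _ (proj2_sig a))) _ _ _);
    intros; apply proj1_sig_inj; simpl.
  - apply gmulA.
  - apply gmul1.
  - apply gmulV.
Defined.

Definition sub_incl {G : grp} (P : G -> Prop) (HP : is_subgroup P) : hom (sub_grp P HP) G :=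
  Hom (sub_grp P HP) G (@proj1_sig G P) (fun a b => eq_refl).

Fixpoint hnn_word {Gam H : grp} (iota : hom Gam H) (t : H) (l : list (Z * Gam)) : H :=
  match l with
  | [] => gone
  | (e, g) :: l' => zpow t e ⋅ (iota g ⋅ hnn_word iota t l')
  end.

Section HNNWords.
Context {Gam H : grp} (iota : hom Gam H) (t : H).

Lemma hnn_word_cat l1 l2 : hnn_word iota t (l1 ++ l2) = hnn_word iota t l1 ⋅ hnn_word iota t l2.
Proof.
  induction l1 as [|[e g] l1 IH]; simpl.
  - symmetry. apply gmul1.
  - rewrite IH, !gmulA. reflexivity.
Qed.

Lemma hnn_word_invg l : exists l', hnn_word iota t l' = ginv (hnn_word iota t l).
Proof.
  induction l as [|[e g] l [l' IH]].
  - exists []. symmetry. apply invg1.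
  - exists (l' ++ [(0%Z, ginv g); ((- e)%Z, gone)]).
    rewrite hnn_word_cat, IH. simpl.
    rewrite morph1, morphV, zpowN, gmul1, !mulg1, !invMg, !gmulA. reflexivity.
Qed.

Lemma HNN_generated (N : Gam -> Prop) (HH : is_HNN_id N iota t)
    (P : H -> Prop) (HP : is_subgroup P) :
  (forall g, P (iota g)) -> P t -> forall x, P x.
Proof.
  intros Piota Pt x. destruct HH as [Ht HU].
  set (S := sub_grp P HP).
  assert (fM : forall g g', (exist P (iota (g ⋅ g')) (Piota _) : S)
                 = gmul (g := S) (exist P (iota g) (Piota g)) (exist P (iota g') (Piota g')))
    by (intros; apply proj1_sig_inj, hfunM).
  set (f := Hom Gam S _ fM).
  set (s := exist P t Pt : S).
  destruct (HU S f s) as [[h [hf hs]] _].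
  { intros n Hn. apply proj1_sig_inj, Ht, Hn. }
  destruct (HU H iota t Ht) as [_ Uniq].
  change x with (hom_id H x).
  rewrite <- (Uniq (hom_comp h (sub_incl P HP)) (hom_id H)); auto; simpl.
  - apply (proj2_sig (h x)).
  - intros g. rewrite hf. reflexivity.
  - rewrite hs. reflexivity.
Qed.

Lemma hnn_word_surj (N : Gam -> Prop) : is_HNN_id N iota t ->
  forall x, exists l, hnn_word iota t l = x.
Proof.
  intros HH. refine (HNN_generated N HH (fun x => exists l, hnn_word iota t l = x) _ _ _).
  - split; [exists []; reflexivity | split].
    + intros x y [l1 <-] [l2 <-]. exists (l1 ++ l2). apply hnn_word_cat.
    + intros x [l <-]. apply hnn_word_invg.
  - intros g. exists [(0%Z, g)]. simpl. rewrite gmul1, mulg1. reflexivity.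
  - exists [(1%Z, gone)]. simpl. rewrite morph1, !mulg1. reflexivity.
Qed.

End HNNWords.

Fixpoint reduced {Gam : grp} (N : Gam -> Prop) (l : list (Z * Gam)) : Prop :=
  match l with
  | (_, g) :: (((e', _) :: _) as l') => ~ N g /\ e' <> 0%Z /\ reduced N l'
  | _ => True
  end.

Lemma reduced_tail {Gam : grp} {N : Gam -> Prop} {p l} : reduced N (p :: l) -> reduced N l.
Proof. destruct p, l as [|[] l]; simpl; tauto. Qed.

Section Reduction.
Context {Gam H : grp} (N : Gam -> Prop) (iota : hom Gam H) (t : H).
Hypothesis Ht : forall n, N n -> ginv t ⋅ (iota n ⋅ t) = iota n.

Lemma hnn_word_merge_N e g e' g' l : N g ->
  hnn_word iota t (((e + e')%Z, g ⋅ g') :: l) = hnn_word iota t ((e, g) :: (e', g') :: l).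
Proof.
  intros Ng. simpl.
  assert (Ct : commute (iota g) t).
  { unfold commute. rewrite <- (Ht g Ng) at 2. symmetry. apply mulKVg. }
  rewrite zpowD, hfunM, !gmulA, <- (gmulA (zpow t e) (iota g)), (commute_zpow _ _ e' Ct).
  rewrite gmulA. reflexivity.
Qed.

Lemma hnn_word_merge_0 e g g' l :
  hnn_word iota t ((e, g ⋅ g') :: l) = hnn_word iota t ((e, g) :: (0%Z, g') :: l).
Proof. simpl. rewrite gmul1, hfunM, !gmulA. reflexivity. Qed.

Lemma reduced_cons l : reduced N l -> forall e g,
  exists l', reduced N l' /\ hnn_word iota t l' = hnn_word iota t ((e, g) :: l).
Proof.
  induction l as [|[e' g'] l IH]; intros Rl e g.
  - exists [(e, g)]. split; [exact I | reflexivity].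
  - destruct (classic (N g)) as [Ng|Ng].
    { destruct (IH (reduced_tail Rl) (e + e')%Z (g ⋅ g')) as (l' & Rl' & Wl').
      exists l'. split; [exact Rl'|]. rewrite Wl'. apply hnn_word_merge_N, Ng. }
    destruct (Z.eq_dec e' 0) as [->|He'].
    { destruct (IH (reduced_tail Rl) e (g ⋅ g')) as (l' & Rl' & Wl').
      exists l'. split; [exact Rl'|]. rewrite Wl'. apply hnn_word_merge_0. }
    exists ((e, g) :: (e', g') :: l). split; [simpl; auto | reflexivity].
Qed.

Lemma reduce_word l : exists l', reduced N l' /\ hnn_word iota t l' = hnn_word iota t l.
Proof.
  induction l as [|[e g] l (l1 & Rl1 & Wl1)].
  - exists []. split; [exact I | reflexivity].
  - destruct (reduced_cons l1 Rl1 e g) as (l' & Rl' & Wl').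
    exists l'. split; [exact Rl'|]. rewrite Wl'. simpl. rewrite Wl1. reflexivity.
Qed.

End Reduction.

Lemma hnn_reduced_word_surj {Gam H : grp} (N : Gam -> Prop) (iota : hom Gam H) (t : H) :
  is_HNN_id N iota t -> forall x, exists l, reduced N l /\ hnn_word iota t l = x.
Proof.
  intros HH x. destruct (hnn_word_surj iota t N HH x) as [l <-].
  apply (reduce_word N iota t (proj1 HH)).
Qed.

Definition is_normal {G : grp} (N : G -> Prop) : Prop :=
  forall n g, N n -> N (ginv g ⋅ (n ⋅ g)).

Lemma central_normal {G : grp} (N : G -> Prop) : is_central N -> is_normal N.
Proof. intros HC n g Hn. rewrite (HC n g Hn), mulKg. exact Hn. Qed.

Section CosetAction.
Context {Gam : grp} (N : Gam -> Prop).
Hypothesis HN : is_subgroup N.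
Hypothesis HNnormal : is_normal N.

Definition same_lcoset (x y : Gam) : Prop := N (ginv x ⋅ y).

Lemma same_lcoset_sym x y : same_lcoset x y -> same_lcoset y x.
Proof.
  unfold same_lcoset. intros E. apply HN in E.
  rewrite invMg, invgK in E. exact E.
Qed.

Lemma same_lcoset_trans x y z : same_lcoset x y -> same_lcoset y z -> same_lcoset x z.
Proof.
  unfold same_lcoset. intros E1 E2.
  rewrite <- (mulKVg y z), gmulA. apply HN; assumption.
Qed.

Lemma same_lcoset_mull a x y : same_lcoset x y -> same_lcoset (a ⋅ x) (a ⋅ y).
Proof. unfold same_lcoset. rewrite invMg, <- gmulA, mulKg. trivial. Qed.

Lemma same_lcoset_mulN x n : N n -> same_lcoset x (x ⋅ n).
Proof. unfold same_lcoset. rewrite mulKg. trivial. Qed.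

Lemma same_lcoset_N x y : same_lcoset x y -> N x -> N y.
Proof.
  unfold same_lcoset. intros E Nx.
  rewrite <- (mulKVg x y). apply HN; assumption.
Qed.

Definition coset_rep (x : Gam) : Gam :=
  epsilon (inhabits gone) (fun r => same_lcoset x r).

Lemma same_lcoset_rep x : same_lcoset x (coset_rep x).
Proof.
  apply (epsilon_spec (inhabits gone) (fun r => same_lcoset x r)).
  exists x. unfold same_lcoset. rewrite gmulV. apply HN.
Qed.

Lemma coset_rep_eq x y : same_lcoset x y -> coset_rep x = coset_rep y.
Proof.
  intros E. unfold coset_rep. f_equal.
  extensionality r. apply propositional_extensionality. split.
  - apply same_lcoset_trans, same_lcoset_sym, E.
  - apply same_lcoset_trans, E.
Qed.

Lemma coset_repK x : coset_rep (coset_rep x) = coset_rep x.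
Proof. symmetry. apply coset_rep_eq, same_lcoset_rep. Qed.

(* Normal forms of (Gam/N) * (Gam/N): alternating lists of non-trivial
   cosets, each tagged with the free factor it lives in. *)
Definition head_side (L : list (bool * Gam)) : option bool := option_map fst (hd_error L).

Fixpoint normal_form (L : list (bool * Gam)) : Prop :=
  match L with
  | [] => True
  | (b, q) :: R => coset_rep q = q /\ ~ N q /\ head_side R <> Some b /\ normal_form R
  end.

Definition cons_coset (b : bool) (z : Gam) (L : list (bool * Gam)) : list (bool * Gam) :=
  if excluded_middle_informative (N z) then L else (b, coset_rep z) :: L.

Definition act (b : bool) (g : Gam) (L : list (bool * Gam)) : list (bool * Gam) :=
  match L with
  | (b', q) :: R => if Bool.eqb b b' then cons_coset b (g ⋅ q) R else cons_coset b g L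
  | [] => cons_coset b g []
  end.

Lemma cons_coset_N b z L : N z -> cons_coset b z L = L.
Proof. unfold cons_coset. destruct excluded_middle_informative; tauto. Qed.

Lemma cons_coset_notN b z L : ~ N z -> cons_coset b z L = (b, coset_rep z) :: L.
Proof. unfold cons_coset. destruct excluded_middle_informative; tauto. Qed.

Lemma cons_coset_same_lcoset b z z' L : same_lcoset z z' -> cons_coset b z L = cons_coset b z' L.
Proof.
  intros E. destruct (classic (N z)) as [Nz|Nz].
  - rewrite !cons_coset_N; auto. apply (same_lcoset_N _ _ E Nz).
  - rewrite !cons_coset_notN, (coset_rep_eq _ _ E); auto.
    intros Nz'. apply Nz, (same_lcoset_N _ _ (same_lcoset_sym _ _ E) Nz').
Qed.

Lemma normal_form_cons_coset b z L :
  head_side L <> Some b -> normal_form L -> normal_form (cons_coset b z L).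
Proof.
  intros HL NL. destruct (classic (N z)) as [Nz|Nz].
  - rewrite cons_coset_N; auto.
  - rewrite cons_coset_notN by exact Nz. simpl. repeat split; auto using coset_repK.
    intros Nr. apply Nz, (same_lcoset_N _ _ (same_lcoset_sym _ _ (same_lcoset_rep z)) Nr).
Qed.

Lemma act_same b g q R : act b g ((b, q) :: R) = cons_coset b (g ⋅ q) R.
Proof. simpl. rewrite Bool.eqb_reflx. reflexivity. Qed.

Lemma act_other b g L : head_side L <> Some b -> act b g L = cons_coset b g L.
Proof.
  destruct L as [|[b' q] R]; simpl; [reflexivity|]. intros Hb. cbn in Hb.
  destruct (Bool.eqb b b') eqn:E; [apply Bool.eqb_prop in E; congruence | reflexivity].
Qed.

Lemma act_fresh b z L : head_side L <> Some b -> ~ N z -> act b z L = (b, coset_rep z) :: L.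
Proof. intros; rewrite act_other, cons_coset_notN; auto. Qed.

Lemma head_side_cases b L : (exists q R, L = (b, q) :: R) \/ head_side L <> Some b.
Proof.
  destruct L as [|[b' q] R]; cbn; [right; discriminate|].
  destruct (Bool.bool_dec b' b) as [->|Hb]; [left; eauto | right; congruence].
Qed.

Lemma normal_form_act b g L : normal_form L -> normal_form (act b g L).
Proof.
  intros NL. destruct (head_side_cases b L) as [(q & R & ->)|HL].
  - rewrite act_same. apply normal_form_cons_coset; apply NL.
  - rewrite act_other by exact HL. apply normal_form_cons_coset; assumption.
Qed.

Lemma act_N b n L : N n -> normal_form L -> act b n L = L.
Proof.
  intros Nn NL. destruct (head_side_cases b L) as [(q & R & ->)|HL].
  - destruct NL as (Rq & Nq & HR & _). rewrite act_same, cons_coset_notN.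
    + rewrite <- Rq at 2. do 2 f_equal. symmetry. apply coset_rep_eq, HNnormal, Nn.
    + intros Nnq. apply Nq. rewrite <- (mulKg n q). apply HN; [apply HN|]; assumption.
  - rewrite act_other, cons_coset_N; auto.
Qed.

Lemma act_mul b g h L : normal_form L -> act b g (act b h L) = act b (g ⋅ h) L.
Proof.
  intros NL.
  assert (Step : forall z R, head_side R <> Some b ->
            act b g (cons_coset b z R) = cons_coset b (g ⋅ z) R).
  { intros z R HR. destruct (classic (N z)) as [Nz|Nz].
    - rewrite cons_coset_N, act_other by assumption.
      apply cons_coset_same_lcoset, same_lcoset_mulN, Nz.
    - rewrite cons_coset_notN, act_same by assumption.
      apply cons_coset_same_lcoset, same_lcoset_mull, same_lcoset_sym, same_lcoset_rep. }
  destruct (head_side_cases b L) as [(q & R & ->)|HL].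
  - rewrite !act_same, Step, gmulA by apply NL. reflexivity.
  - rewrite (act_other b h), (act_other b (g ⋅ h)), Step by assumption. reflexivity.
Qed.

Definition normal_forms : Type := {L | normal_form L}.

Definition act_nf (b : bool) (g : Gam) (w : normal_forms) : normal_forms :=
  exist normal_form (act b g (proj1_sig w)) (normal_form_act b g _ (proj2_sig w)).

Lemma act_nf_mul b g h w : act_nf b g (act_nf b h w) = act_nf b (g ⋅ h) w.
Proof. apply proj1_sig_inj, act_mul, proj2_sig. Qed.

Lemma act_nf_N b n w : N n -> act_nf b n w = w.
Proof. intros Nn. apply proj1_sig_inj, act_N; [exact Nn | apply proj2_sig]. Qed.

Lemma act_nf_invK b g w : act_nf b (ginv g) (act_nf b g w) = w.
Proof. rewrite act_nf_mul. apply act_nf_N. rewrite gmulV. apply HN. Qed.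

Lemma act_nf_K b g w : act_nf b g (act_nf b (ginv g) w) = w.
Proof. rewrite <- (invgK g) at 1. apply act_nf_invK. Qed.

Definition act_perm (b : bool) (g : Gam) : Sym normal_forms :=
  Perm (act_nf b g) (act_nf b (ginv g)) (act_nf_K b g) (act_nf_invK b g).

Definition act_hom (b : bool) : hom Gam (Sym normal_forms).
Proof.
  refine (Hom Gam (Sym normal_forms) (act_perm b) _). intros g h.
  apply perm_ext; intros w; simpl; rewrite act_nf_mul; [reflexivity|].
  rewrite invMg. reflexivity.
Defined.

Lemma act_hom_N n : N n -> act_hom true n = act_hom false n.
Proof.
  intros Nn. apply perm_ext; intros w; simpl; rewrite !act_nf_N; auto; apply HN, Nn.
Qed.

End CosetAction.

Definition exponents_avoid {Gam : grp} (N : Gam -> Prop) (c : Gam) (l : list (Z * Gam)) : Prop :=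
  forall e g, In (e, g) l -> e <> 0%Z -> ~ N (zpow c e).

Section AmalgamImage.
Context {Gam : grp} (N : Gam -> Prop).
Hypothesis HN : is_subgroup N.
Hypothesis HNnormal : is_normal N.

Definition word_act (c : Gam) (l : list (Z * Gam)) (L : list (bool * Gam)) : list (bool * Gam) :=
  fold_right (fun p L => act N false (zpow c (fst p)) (act N true (snd p) L)) L l.

Lemma word_act_cons c e g l L :
  word_act c ((e, g) :: l) L = act N false (zpow c e) (act N true g (word_act c l L)).
Proof. reflexivity. Qed.

Lemma word_act_head c e g l :
  reduced N ((e, g) :: l) -> e <> 0%Z -> exponents_avoid N c ((e, g) :: l) ->
  head_side (word_act c ((e, g) :: l) []) = Some false.
Proof.
  revert e g. induction l as [|[e' g'] l IH]; intros e g Rl He Hc.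
  all: assert (Hce : ~ N (zpow c e)) by (apply (Hc e g); [left; reflexivity | exact He]).
  all: rewrite word_act_cons.
  - change (word_act c [] []) with (@nil (bool * Gam)).
    destruct (classic (N g)) as [Ng|Ng].
    + rewrite (act_N N HN HNnormal true g [] Ng I), (act_fresh N false)
        by (assumption || discriminate).
      reflexivity.
    + rewrite (act_fresh N true g []), (act_fresh N false) by (assumption || discriminate).
      reflexivity.
  - destruct Rl as (Ng & He' & Rl).
    pose proof (IH e' g' Rl He' (fun e'' g'' Hin => Hc e'' g'' (or_intror Hin))) as Hh.
    rewrite (act_fresh N true g), (act_fresh N false) by (rewrite ?Hh; assumption || discriminate).
    reflexivity.
Qed.

Section Image.
Context {H A : grp} (iota : hom Gam H) (t : H) (j1 j2 : hom Gam A).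
Context (c : Gam) (phi : hom H A).
Hypotheses (phi_iota : forall g, phi (iota g) = j1 g) (phi_t : phi t = j2 c).
Hypothesis HA : is_amalgam_id N j1 j2.

Lemma word_act_image (hA : hom A (Sym (normal_forms N)))
    (hA1 : forall g, hA (j1 g) = act_hom N HN HNnormal true g)
    (hA2 : forall g, hA (j2 g) = act_hom N HN HNnormal false g) l w :
  proj1_sig (perm_fun (hA (phi (hnn_word iota t l))) w) = word_act c l (proj1_sig w).
Proof.
  revert w. induction l as [|[e g] l IH]; intros w; simpl.
  - rewrite !morph1. reflexivity.
  - rewrite !(hfunM phi), phi_iota, (morph_zpow phi), phi_t, <- (morph_zpow j2),
      !(hfunM hA), hA1, hA2.
    simpl. rewrite IH. reflexivity.
Qed.

Lemma amalgam_image_trivial l :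
  reduced N l -> exponents_avoid N c l ->
  phi (hnn_word iota t l) = gone -> hnn_word iota t l = gone.
Proof.
  intros Rl Hc Hphi. destruct HA as [_ HU].
  destruct (HU _ (act_hom N HN HNnormal true) (act_hom N HN HNnormal false)
              (act_hom_N N HN HNnormal)) as [[hA [hA1 hA2]] _].
  assert (Htriv : word_act c l [] = []).
  { pose proof (word_act_image hA hA1 hA2 l (exist _ [] I)) as E.
    rewrite Hphi, morph1 in E. symmetry. exact E. }
  destruct l as [|[e g] l]; [reflexivity|].
  destruct (Z.eq_dec e 0) as [->|He].
  2: { pose proof (word_act_head c e g l Rl He Hc) as Hh. rewrite Htriv in Hh. discriminate. }
  destruct l as [|[e' g'] l].
  - destruct (HU Gam (hom_id Gam) (hom_id Gam) (fun n _ => eq_refl)) as [[fold [fold1 _]] _].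
    simpl in Hphi |- *. rewrite gmul1, mulg1, phi_iota in Hphi.
    assert (Hg : g = gone) by (change g with (hom_id Gam g); rewrite <- fold1, Hphi; apply morph1).
    rewrite gmul1, mulg1, Hg. apply morph1.
  - destruct Rl as (Ng & He' & Rl).
    pose proof (word_act_head c e' g' l Rl He' (fun e g Hin => Hc e g (or_intror Hin))) as Hh.
    rewrite word_act_cons, (act_fresh N true) in Htriv
      by (rewrite ?Hh; assumption || discriminate).
    rewrite act_other, cons_coset_N in Htriv by (apply HN || discriminate). discriminate.
Qed.

End Image.

End AmalgamImage.

Lemma HNN_to_amalgam {Gam H A : grp} (N : Gam -> Prop) (HC : is_central N)
    (iota : hom Gam H) (t : H) (HH : is_HNN_id N iota t)
    (j1 j2 : hom Gam A) (HA : is_amalgam_id N j1 j2) (c : Gam) :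
  exists phi : hom H A, (forall g, phi (iota g) = j1 g) /\ phi t = j2 c.
Proof.
  destruct HH as [_ HU]. apply (HU A j1 (j2 c)). intros n Hn.
  rewrite (proj1 HA n Hn), <- hfunM, (HC n c Hn), hfunM, mulKg. reflexivity.
Qed.

Lemma word_exponents_bounded {Gam : grp} (l : list (Z * Gam)) :
  exists K : nat, forall e g, In (e, g) l -> (Z.abs e <= Z.of_nat K)%Z.
Proof.
  induction l as [|[e g] l [K HK]].
  - exists O. intros e g [].
  - exists (Z.abs_nat e + K)%nat. intros e' g' [E|Hin].
    + injection E as -> ->. lia.
    + specialize (HK e' g' Hin). lia.
Qed.

Theorem lemma8p2 (Gam : grp) (N : Gam -> Prop)
  (HN : is_subgroup N) (HC : is_central N)
  (H : grp) (iota : hom Gam H) (t : H) (HH : is_HNN_id N iota t)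
  (A : grp) (j1 j2 : hom Gam A) (HA : is_amalgam_id N j1 j2) :
  ((exists g0 : Gam, forall k : Z, k <> 0%Z -> ~ N (zpow g0 k)) -> embeds H A) /\
  ((forall K : nat, exists g0 : Gam, forall k : Z,
       (1 <= Z.abs k <= Z.of_nat K)%Z -> ~ N (zpow g0 k)) ->
   ~ residually_finite H -> ~ residually_finite A).
Proof.
  pose proof (amalgam_image_trivial N HN (central_normal N HC) iota t j1 j2) as Hker.
  pose proof (hnn_reduced_word_surj N iota t HH) as Hred.
  split.
  - intros [c Hc]. destruct (HNN_to_amalgam N HC iota t HH j1 j2 HA c) as (phi & Pi & Pt).
    exists phi. apply morph_injective. intros x Hx.
    destruct (Hred x) as (l & Rl & <-).
    apply (Hker c phi Pi Pt HA l Rl); [intros e g _; apply Hc | exact Hx].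
  - intros Hc nRF RFA. apply nRF. intros x Hx.
    destruct (Hred x) as (l & Rl & <-).
    destruct (word_exponents_bounded l) as [K HK].
    destruct (Hc K) as [c HcK].
    destruct (HNN_to_amalgam N HC iota t HH j1 j2 HA c) as (phi & Pi & Pt).
    assert (Hphix : phi (hnn_word iota t l) <> gone).
    { intros E. apply Hx, (Hker c phi Pi Pt HA l Rl); [|exact E].
      intros e g Hin He. apply HcK. specialize (HK e g Hin). lia. }
    destruct (RFA _ Hphix) as (F & psi & HF & Hpsi).
    exists F, (hom_comp phi psi). split; assumption.
Qed.
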